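(* Let $f$ be a convergent power series in $\mathbf z=(z_1,\dots,z_n)$ with $f(\mathbf 0)=0$, let $P,Q$ be strictly positive weight vectors with normalized weights $\hat P=P/d(P,f)=(\hat p_1,\dots,\hat p_n)$, $\hat Q=Q/d(Q,f)=(\hat q_1,\dots,\hat q_n)$, and for $0\le s\le1$ let $\hat R_s=s\hat P+(1-s)\hat Q=(\hat r_{s,1},\dots,\hat r_{s,n})$. (1) If $P,Q$ are admissible, then for all $i,j$ and $0<s<1$, $\eta_{ij}(\hat R_s)\le\max\{\eta_{ij}(\hat P),\eta_{ij}(\hat Q)\}$; in particular $\eta(\hat R_s)\le\max\{\eta(\hat P),\eta(\hat Q)\}$. (2) If $P,Q$ are $J$-admissible, then for all $i,j$ and $0<s<1$, $\eta'_{ij}(\hat R_s)\le\max\{\eta'_{ij}(\hat P),\eta'_{ij}(\hat Q)\}$.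
   Context: For a convergent power series $g=\sum c_\nu\mathbf z^\nu$, $\Gamma_+(g)$ is the convex hull of $\bigcup_{c_\nu\ne0}(\nu+\mathbb R_{\ge0}^n)$; for a weight $X=(x_1,\dots,x_n)\in\mathbb R_{\ge0}^n$, $d(X,g)=\min\{\sum x_i\nu_i:\nu\in\Gamma_+(g)\}$ and $\Delta(X,g)$ is the face where it is attained. A weight is strictly positive if all its entries are positive. $f_j=\partial f/\partial z_j$. $P,Q$ are admissible if $\Delta(P,f)\cap\Delta(Q,f)\ne\emptyset$, and $J$-admissible if moreover $\Delta(P,f_i)\cap\Delta(Q,f_i)\ne\emptyset$ for every $i$. For a strictly positive $X=(x_1,\dots,x_n)$: $\eta_{ij}(X)=(1-x_j)/x_i$, $\eta(X)=1/\min_kx_k-1$, and $\eta'_{ij}(X)=d(X,f_j)/x_i$. *)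

From HB Require Import structures.
From mathcomp Require Import all_boot all_order all_algebra.
From mathcomp Require Import all_classical all_reals.
From mathcomp Require Import complex.
Set Implicit Arguments. Unset Strict Implicit. Unset Printing Implicit Defensive.
Import Order.TTheory GRing.Theory Num.Theory.
Local Open Scope ring_scope.
Local Open Scope classical_set_scope.

Section Defs.
Variables (R : realType) (n : nat).

(* A (formal) power series in z = (z_1,...,z_n) with complex coefficients:
   the coefficient of z^nu, for a multi-index nu : 'I_n -> nat. *)
Definition pseries := ('I_n -> nat) -> R[i].

Definition cmod (z : R[i]) : R := Num.sqrt (complex.Re z ^+ 2 + complex.Im z ^+ 2).

Definition mdeg (nu : 'I_n -> nat) : nat := (\sum_(k < n) nu k)%N.

(* g is convergent: for some r > 0, sum_nu |c_nu| r^|nu| < oo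
   (absolute convergence of the series on the polydisc of radius r);
   the partial sums over the boxes {nu | nu_k < N} are bounded. *)
Definition convergent (g : pseries) : Prop :=
  exists r : R, 0 < r /\ exists M : R, forall N : nat,
    \sum_(nu : {ffun 'I_n -> 'I_N})
       cmod (g (fun k => nat_of_ord (nu k))) * r ^+ mdeg (fun k => nat_of_ord (nu k))
    <= M.

Definition vanishes_at_0 (g : pseries) : Prop := g (fun _ => 0%N) = 0.

(* partial derivative f_j = df/dz_j : coefficient of z^nu is (nu_j+1) c_{nu+e_j} *)
Definition pderiv (g : pseries) (j : 'I_n) : pseries :=
  fun nu => g (fun k => (nu k + (k == j))%N) *+ (nu j).+1.

Definition rvec := 'I_n -> R.

(* Newton polyhedron Gamma_+(g): convex hull of the union of nu + R_{>=0}^n,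
   c_nu <> 0 (finite convex combinations). *)
Definition newton_poly (g : pseries) : set rvec :=
  [set x | exists (m : nat) (w : 'I_m -> R) (pts : 'I_m -> ('I_n -> nat))
              (v : 'I_m -> rvec),
     (forall l, 0 <= w l) /\ \sum_(l < m) w l = 1 /\
     (forall l, g (pts l) != 0) /\ (forall l k, 0 <= v l k) /\
     (forall k, x k = \sum_(l < m) w l * ((pts l k)%:R + v l k))].

Definition dotw (X x : rvec) : R := \sum_(k < n) X k * x k.

Definition dval (X : rvec) (g : pseries) : R :=
  inf [set dotw X x | x in newton_poly g].

Definition face (X : rvec) (g : pseries) : set rvec :=
  [set x | newton_poly g x /\ dotw X x = dval X g].

Definition strictly_positive (X : rvec) : Prop := forall k, 0 < X k.

Definition admissible (f : pseries) (P Q : rvec) : Prop :=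
  face P f `&` face Q f !=set0.

Definition J_admissible (f : pseries) (P Q : rvec) : Prop :=
  admissible f P Q /\ forall i, face P (pderiv f i) `&` face Q (pderiv f i) !=set0.

Definition eta_ij (X : rvec) (i j : 'I_n) : R := (1 - X j) / X i.

Definition minw (X : rvec) : R := inf [set X k | k in [set: 'I_n]].

Definition eta_max (X : rvec) : R := (minw X)^-1 - 1.

Definition eta'_ij (f : pseries) (X : rvec) (i j : 'I_n) : R :=
  dval X (pderiv f j) / X i.

Definition normalized (f : pseries) (X : rvec) : rvec := fun k => X k / dval X f.

Definition segment (Ph Qh : rvec) (s : R) : rvec := fun k => s * Ph k + (1 - s) * Qh k.

End Defs.

(** Along the segment both [1 - r_(s,j)] and [r_(s,i)] are affine in [s],
    so [eta_ij(R_s)] is a mediant of the endpoint values and never exceeds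
    the larger one; [eta(R_s) = 1 / min_k r_(s,k) - 1] is bounded because
    [min_k r_(s,k) >= min (min_k p^_k) (min_k q^_k)].  For (2), a common
    point of [Delta(P, f_j)] and [Delta(Q, f_j)] minimises both normalised
    weights on [Gamma_+(f_j)], hence also [R_s], so [d(R_s, f_j)] is affine
    in [s] and [eta'_ij(R_s)] is again a mediant.  Positivity of [d(P, f)]
    and [d(Q, f)] comes from [f(0) = 0] and the attained minimum given by
    admissibility. *)
From HB Require Import structures.
From mathcomp Require Import all_boot all_order all_algebra.
From mathcomp Require Import all_classical all_reals.
From mathcomp Require Import complex.
From mathcomp Require Import ring lra.
Import Order.TTheory GRing.Theory Num.Theory.
Local Open Scope ring_scope.
Local Open Scope classical_set_scope.

Set Implicit Arguments.

Lemma psumr_gt0 (R : numDomainType) (I : finType) (F : I -> R) (i0 : I) :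
  (forall i, 0 <= F i) -> 0 < F i0 -> 0 < \sum_i F i.
Proof.
move=> F_ge0 Fi0_gt0; rewrite lt_def sumr_ge0 // andbT psumr_neq0 //.
by apply/hasP; exists i0; rewrite ?mem_index_enum.
Qed.

Lemma mediant_le_max (R : realFieldType) (s p q u v : R) :
  0 < p -> 0 < q -> 0 <= s <= 1 ->
  (s * u + (1 - s) * v) / (s * p + (1 - s) * q) <= Num.max (u / p) (v / q).
Proof.
move=> p_gt0 q_gt0 /andP[s_ge0 s_le1]; set M := Num.max _ _.
have hu : u <= M * p by rewrite -ler_pdivrMr // le_max lexx.
have hv : v <= M * q by rewrite -ler_pdivrMr // le_max lexx orbT.
have den_gt0 : 0 < s * p + (1 - s) * q by nra.
rewrite ler_pdivrMr //; nra.
Qed.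

Section NewtonPolyhedron.
Variables (R : realType) (n : nat).
Implicit Types (g : pseries R n) (X Y x : rvec R n).

Lemma newton_poly_ge0 g x k : newton_poly g x -> 0 <= x k.
Proof.
move=> [m [w [pts [v [w_ge0 [_ [_ [v_ge0 ->]]]]]]]].
by apply: sumr_ge0 => l _; rewrite mulr_ge0 ?addr_ge0.
Qed.

Lemma dotw_ge0 X x : (forall k, 0 <= X k) -> (forall k, 0 <= x k) -> 0 <= dotw X x.
Proof. by move=> X_ge0 x_ge0; apply: sumr_ge0 => k _; rewrite mulr_ge0. Qed.

Lemma dotw_gt0 X x k :
  strictly_positive X -> (forall k, 0 <= x k) -> 0 < x k -> 0 < dotw X x.
Proof.
move=> X_gt0 x_ge0 xk_gt0; apply: (@psumr_gt0 _ _ _ k); last exact: mulr_gt0.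
by move=> k'; exact: mulr_ge0 (ltW (X_gt0 k')) (x_ge0 k').
Qed.

(* [g(0) = 0] means that no exponent of [g] is the zero multi-index. *)
Lemma newton_poly_vanishes_at_0 g x :
  vanishes_at_0 g -> newton_poly g x -> exists k, 0 < x k.
Proof.
move=> g0 [m [w [pts [v [w_ge0 [w_sum1 [pts_nz [v_ge0 x_def]]]]]]]].
have [l /andP[_ wl_gt0]] : exists l, true && (0 < w l).
  by apply: psumr_neq0P => //; rewrite w_sum1 => /eqP; rewrite oner_eq0.
have [k ptk_gt0] : exists k, (0 < pts l k)%N.
  apply/existsP; apply: contraT; rewrite negb_exists => /forallP pts0.
  move: (pts_nz l); suff -> : pts l = (fun _ => 0%N) by rewrite g0 eqxx.
  by apply: boolp.funext => k; move: (pts0 k); rewrite lt0n negbK => /eqP.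
exists k; rewrite x_def (@psumr_gt0 _ _ _ l) //.
  by move=> l'; rewrite mulr_ge0 ?addr_ge0.
by rewrite mulr_gt0 // ltr_pwDl // ltr0n.
Qed.

Lemma dval_le_dotw g X x :
  (forall k, 0 <= X k) -> newton_poly g x -> dval X g <= dotw X x.
Proof.
move=> X_ge0 gx; apply: ge_inf; last by exists x.
exists 0 => _ [y gy <-]; apply: dotw_ge0 => // k; exact: newton_poly_ge0 gy.
Qed.

Lemma dval_eq_dotw g X x0 :
  newton_poly g x0 -> (forall x, newton_poly g x -> dotw X x0 <= dotw X x) ->
  dval X g = dotw X x0.
Proof.
move=> gx0 x0_min; apply/eqP; rewrite eq_le; apply/andP; split.
  apply: ge_inf; last by exists x0.
  by exists (dotw X x0) => _ [y gy <-]; exact: x0_min.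
apply: lb_le_inf; first by exists (dotw X x0), x0.
by move=> _ [y gy <-]; exact: x0_min.
Qed.

Lemma face_dotw_min g X x0 x :
  (forall k, 0 <= X k) -> face X g x0 -> newton_poly g x -> dotw X x0 <= dotw X x.
Proof. by move=> X_ge0 [_ ->]; exact: dval_le_dotw. Qed.

Lemma dval_gt0 g X :
  vanishes_at_0 g -> strictly_positive X -> face X g !=set0 -> 0 < dval X g.
Proof.
move=> g0 X_gt0 [x [gx <-]]; have [k xk_gt0] := newton_poly_vanishes_at_0 g0 gx.
by apply: dotw_gt0 xk_gt0 => // k'; exact: newton_poly_ge0 gx.
Qed.

Lemma dotw_normalized g X x : dotw (normalized g X) x = dotw X x / dval X g.
Proof. by rewrite /dotw mulr_suml; apply: eq_bigr => k _; rewrite mulrAC. Qed.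

Lemma dotw_segment X Y x s :
  dotw (segment X Y s) x = s * dotw X x + (1 - s) * dotw Y x.
Proof.
rewrite /dotw !mulr_sumr -big_split; apply: eq_bigr => k _ /=.
by rewrite mulrDl !mulrA.
Qed.

Lemma face_normalized_min f g X x0 x :
  strictly_positive X -> 0 < dval X f -> face X g x0 -> newton_poly g x ->
  dotw (normalized f X) x0 <= dotw (normalized f X) x.
Proof.
move=> X_gt0 dX_gt0 gx0 gx; rewrite !dotw_normalized ler_pM2r ?invr_gt0 //.
by apply: face_dotw_min gx0 gx => k; exact: ltW.
Qed.

Lemma dval_segment_common_min g X Y x0 s :
  0 <= s <= 1 -> newton_poly g x0 ->
  (forall x, newton_poly g x -> dotw X x0 <= dotw X x) ->
  (forall x, newton_poly g x -> dotw Y x0 <= dotw Y x) ->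
  dval (segment X Y s) g = s * dval X g + (1 - s) * dval Y g.
Proof.
move=> /andP[s_ge0 s_le1] gx0 X_min Y_min.
rewrite (dval_eq_dotw X gx0 X_min) (dval_eq_dotw Y gx0 Y_min) -dotw_segment.
apply: dval_eq_dotw => // x gx; rewrite !dotw_segment.
by apply: lerD; apply: ler_wpM2l; rewrite ?subr_ge0 ?X_min ?Y_min.
Qed.

Lemma minw_le X k : minw X <= X k.
Proof.
have [k0 _ k0_min] := @arg_minP _ R _ k xpredT X isT.
apply: ge_inf; last by exists k.
by exists (X k0) => _ [k' _ <-]; exact: k0_min.
Qed.

Lemma minw_ge X c (k : 'I_n) : (forall k, c <= X k) -> c <= minw X.
Proof. by move=> c_le; apply: lb_le_inf; [exists (X k), k | move=> _ [k' _ <-]]. Qed.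

Lemma minw_gt0 X (k : 'I_n) : strictly_positive X -> 0 < minw X.
Proof.
move=> X_gt0; have [k0 _ k0_min] := @arg_minP _ R _ k xpredT X isT.
apply: lt_le_trans (X_gt0 k0) (minw_ge X (X k0) k _) => k'; exact: k0_min.
Qed.

Lemma minw_segment_ge X Y s (k : 'I_n) :
  0 <= s <= 1 -> Num.min (minw X) (minw Y) <= minw (segment X Y s).
Proof.
move=> /andP[s_ge0 s_le1]; apply: (minw_ge _ _ k) => k'.
have mX : Num.min (minw X) (minw Y) <= minw X by rewrite ge_min lexx.
have mY : Num.min (minw X) (minw Y) <= minw Y by rewrite ge_min lexx orbT.
have := le_trans mX (minw_le X k'); have := le_trans mY (minw_le Y k').
rewrite /segment; nra.
Qed.

Lemma eta_max_segment_le X Y s (k : 'I_n) :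
  strictly_positive X -> strictly_positive Y -> 0 <= s <= 1 ->
  eta_max (segment X Y s) <= Num.max (eta_max X) (eta_max Y).
Proof.
move=> X_gt0 Y_gt0 s01; rewrite /eta_max.
have mX := minw_gt0 k X_gt0; have mY := minw_gt0 k Y_gt0.
have m_le := minw_segment_ge X Y s k s01.
have m_gt0 : 0 < Num.min (minw X) (minw Y) by rewrite lt_min mX mY.
have inv_le : (minw (segment X Y s))^-1 <= (Num.min (minw X) (minw Y))^-1.
  by rewrite lef_pV2 ?posrE // (lt_le_trans m_gt0 m_le).
rewrite le_max !lerD2r; case/orP: (le_total (minw X) (minw Y)) => h.
  by rewrite (min_l h) in inv_le; rewrite inv_le.
by rewrite (min_r h) in inv_le; rewrite inv_le orbT.
Qed.

End NewtonPolyhedron.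

Theorem lemma13 (R : realType) (n : nat) (f : pseries R n) (P Q : rvec R n) :
  convergent f -> vanishes_at_0 f ->
  strictly_positive P -> strictly_positive Q ->
  let Ph := normalized f P in
  let Qh := normalized f Q in
  (admissible f P Q ->
     forall (i j : 'I_n) (s : R), 0 < s < 1 ->
       eta_ij (segment Ph Qh s) i j <= Num.max (eta_ij Ph i j) (eta_ij Qh i j) /\
       eta_max (segment Ph Qh s) <= Num.max (eta_max Ph) (eta_max Qh)) /\
  (J_admissible f P Q ->
     forall (i j : 'I_n) (s : R), 0 < s < 1 ->
       eta'_ij f (segment Ph Qh s) i j <=
         Num.max (eta'_ij f Ph i j) (eta'_ij f Qh i j)).
Proof.
move=> _ f0 P_gt0 Q_gt0 Ph Qh.
have s01W s : 0 < s < 1 -> 0 <= s <= 1 by case/andP=> /ltW -> /ltW ->.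
have pos : admissible f P Q ->
    [/\ 0 < dval P f, 0 < dval Q f, strictly_positive Ph & strictly_positive Qh].
  move=> [x [faceP faceQ]].
  have dP_gt0 : 0 < dval P f by apply: dval_gt0 => //; exists x.
  have dQ_gt0 : 0 < dval Q f by apply: dval_gt0 => //; exists x.
  by split=> // k; exact: divr_gt0.
split=> [adm | [adm J_adm]] i j s /s01W s01;
  have [dP_gt0 dQ_gt0 Ph_gt0 Qh_gt0] := pos adm.
  split; last exact: eta_max_segment_le.
  rewrite /eta_ij /segment.
  have -> : 1 - (s * Ph j + (1 - s) * Qh j) = s * (1 - Ph j) + (1 - s) * (1 - Qh j).
    by ring.
  exact: mediant_le_max.
have [x0 [facePx0 faceQx0]] := J_adm j.
have Ph_min := face_normalized_min f P_gt0 dP_gt0 facePx0.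
have Qh_min := face_normalized_min f Q_gt0 dQ_gt0 faceQx0.
rewrite /eta'_ij (dval_segment_common_min Ph Qh s s01 facePx0.1 Ph_min Qh_min).
exact: mediant_le_max.
Qed.
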